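(* Fix a starting price $s\in[0,1]$ and consider symmetric equilibria of the Istanbul Flower Auction of the following form. There is a cutoff $p(s)\in[s,1]$ such that a bidder bids at the starting price iff her value $v\ge p(s)$, and otherwise waits. A waiting bidder with value $v$ bids $\beta(v,s)$ in the Dutch phase, where $\beta(v,s)=b(v,s)$ for $v\le\lambda(s)$ and $\beta(v,s)=s$ for $\lambda(s)\le v\le p(s)$. Here $\lambda(s)\le p(s)$, and $b(\cdot,s)$ is strictly increasing and differentiable with $b(0,s)=0$ and values in $[0,s]$. Ties at the price $s$ in the Dutch phase are broken uniformly at random. Then in any such equilibrium $\lambda(s)=p(s)$. Consequently, in the Dutch phase a tie occurs with probability zero. Moreover, suppose $p(s)<1$. The cutoff is pinned down by the indifference condition of a bidder with value $p(s)$ between bidding and waiting, i.e. $c(s-b(p,s))\,p-b(p,s)=p-s$. Then $p(s)$ is the unique solution $p$ of $b(p,s)=s$, and no other $p\in[s,p(s))$ satisfies this indifference condition. When $p(s)=1$, we have $b(1,s)\le s$.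
   Context: Single indivisible item, $n\ge2$ bidders. Private values are i.i.d. on $[0,1]$ with twice differentiable CDF $F$ and density $f$. Write $G(v)=F^{n-1}(v)$ and $g=G'$. Time cost: a differentiable function $c:[0,1]\to\mathbb{R}_+$ with $c(0)=1$ and $c'(t)>-1$. Either $c\equiv1$ (''no time cost''), or $c'(t)<0$ for all $t$ (''there is a time cost''). If a bidder with value $v$ wins at price $p$ after auction duration $t$, her utility is $c(t)v-p$ and the auctioneer receives $p$; losers get $0$. Istanbul Flower Auction with starting price $s\in[0,1]$: bidders simultaneously decide, at no time cost, whether to bid at $s$. - If nobody bids, a Dutch phase follows: the price descends from $s$ until someone bids, and the duration is $t=s-p$ at selling price $p$. - If at least one bids, an English phase among the initial bidders follows: the price ascends from $s$ until the second-to-last initial bidder leaves, and the duration is $t=p-s$. If exactly one bids, the sale is at $s$ with duration $0$. The Dutch-phase first-order condition is $$\frac{\partial b(v,s)}{\partial v}=\frac{g(v)}{G(v)}\,\frac{c(s-b(v,s))v-b(v,s)}{1+c'(s-b(v,s))v},\qquad b(0,s)=0.$$ In the English phase a bidder of value $v\ge p(s)$ stays in until the price $m(v,s)$, defined by $c(m(v,s)-s)v-m(v,s)=0$. A bidder with value $v\ge p(s)$ who bids at $s$ has expected utility $(v-s)G(p(s))+\int_{p(s)}^v[c(m(x,s)-s)v-m(x,s)]\,dG(x)$; at $v=p(s)$ this equals $(p(s)-s)G(p(s))$. *)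

From Stdlib Require Import Reals Lra ClassicalEpsilon.
From Coquelicot Require Import Coquelicot.
Open Scope R_scope.

Definition prob1 (f : R -> R) (A : R -> Prop) : R :=
  RInt (fun x => if excluded_middle_informative (A x) then f x else 0) 0 1.

Definition Gcdf (F : R -> R) (n : nat) (v : R) : R := F v ^ (n - 1)%nat.
Definition gdens (F f : R -> R) (n : nat) (x : R) : R :=
  INR (n - 1)%nat * F x ^ (n - 2)%nat * f x.

(* Symmetric strategy of the other n-1 bidders: value x >= p bids at the
   starting price s; value x < p waits and bids beta x in the Dutch phase.
   Probability that a (deviating) bidder who waits and places Dutch bid d wins,
   when ties are broken uniformly at random: each of the n-1 others
   independently waits with a strictly lower bid (prob. a) or waits with the
   same bid (prob. t); with k tied rivals she wins with probability 1/(k+1). *)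
Definition dutch_win_prob (n : nat) (f : R -> R) (p : R) (beta : R -> R) (d : R) : R :=
  let a := prob1 f (fun x => x < p /\ beta x < d) in
  let t := prob1 f (fun x => x < p /\ beta x = d) in
  sum_f_R0 (fun k => Binomial.C (n - 1)%nat k * a ^ (n - 1 - k)%nat * t ^ k / INR (k + 1)%nat)
    (n - 1)%nat.

(* Expected utility of a bidder of value v who waits and bids d in the Dutch
   phase (duration s - d, price d). *)
Definition wait_payoff (n : nat) (f c : R -> R) (s p : R) (beta : R -> R) (v d : R) : R :=
  (c (s - d) * v - d) * dutch_win_prob n f p beta d.

(* For v >= p this is the formula of the paper
     (v - s) G(p) + int_p^v [c(m(x,s)-s) v - m(x,s)] dG(x);
   for v < p she cannot win the English phase against initial bidders
   (all of value >= p) at a price she would accept, so she only wins when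
   nobody else bids at s: (v - s) G(p). *)
Definition enter_payoff (n : nat) (F f c : R -> R) (s p : R) (m : R -> R) (v : R) : R :=
  (v - s) * Gcdf F n p +
  (if Rle_dec p v
   then RInt (fun x => (c (m x - s) * v - m x) * gdens F f n x) p v
   else 0).

Definition IFA_sym_equilibrium (n : nat) (F f c : R -> R) (s p : R)
    (beta m : R -> R) : Prop :=
  (forall v, 0 <= v <= 1 -> p <= v ->
     forall d, 0 <= d <= s ->
       wait_payoff n f c s p beta v d <= enter_payoff n F f c s p m v) /\
  (forall v, 0 <= v <= 1 -> v < p ->
     enter_payoff n F f c s p m v <= wait_payoff n f c s p beta v (beta v) /\
     forall d, 0 <= d <= s ->
       wait_payoff n f c s p beta v d <= wait_payoff n f c s p beta v (beta v)).

Definition dutch_pair_tie_prob (f : R -> R) (p : R) (beta : R -> R) : R :=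
  RInt (fun x => if Rlt_dec x p
                 then f x * prob1 f (fun y => y < p /\ beta y = beta x)
                 else 0) 0 1.

(** Suppose the Dutch bid were flat at the starting price s on a nontrivial
    interval [lam, p).  A waiting bidder there ties at s with positive
    probability, and uniform tie-breaking makes her probability of winning at
    s strictly smaller than G(p), the probability that nobody bids at s.  If
    s < p she therefore strictly prefers to bid at s right away (which wins at
    price s with probability G(p)); if s = p her waiting payoff is negative,
    whereas bidding 0 in the Dutch phase yields 0.  Hence lam = p, so
    b(p) = s, and strict monotonicity of b rules out ties and gives
    uniqueness.  Below p the indifference condition fails because
    c'(t) > -1 forces c(d) > 1 - d. *)

From Stdlib Require Import Reals Lra Lia Arith ClassicalEpsilon.
From Coquelicot Require Import Coquelicot.
Open Scope R_scope.

Lemma is_RInt_zero_on (g : R -> R) a b :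
  a <= b -> (forall x, a < x < b -> g x = 0) -> is_RInt g a b 0.
Proof.
  intros Hab Hg.
  apply (is_RInt_ext (fun _ => 0)).
  - intros x Hx. rewrite Rmin_left, Rmax_right in Hx by lra.
    symmetry; apply Hg; lra.
  - assert (Hzero : scal (b - a) 0 = 0)
      by exact (scal_zero_r (V := R_NormedModule) (b - a)).
    exact (eq_ind _ (is_RInt (fun _ => 0) a b) (is_RInt_const a b 0) 0 Hzero).
Qed.

Lemma is_RInt_antiderivative (F f g : R -> R) a b : a <= b ->
  (forall x, a <= x <= b -> is_derive F x (f x)) ->
  (forall x, a <= x <= b -> continuous f x) ->
  (forall x, a < x < b -> g x = f x) -> is_RInt g a b (F b - F a).
Proof.
  intros Hab HF Hf Hg.
  apply (is_RInt_ext f).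
  - intros x Hx. rewrite Rmin_left, Rmax_right in Hx by lra.
    symmetry; apply Hg; lra.
  - apply (is_RInt_derive F f); intros x Hx;
      rewrite Rmin_left, Rmax_right in Hx by lra; auto.
Qed.

Lemma prob1_interval (F f : R -> R) (A : R -> Prop) l u :
  0 <= l <= u -> u <= 1 ->
  (forall x, 0 <= x <= 1 -> is_derive F x (f x)) ->
  (forall x, 0 <= x <= 1 -> ex_derive f x) ->
  (forall x, 0 < x < l -> ~ A x) ->
  (forall x, l < x < u -> A x) ->
  (forall x, u < x < 1 -> ~ A x) ->
  prob1 f A = F u - F l.
Proof.
  intros Hl Hu HF Hf Hbelow Hin Habove.
  assert (Hfc : forall x, 0 <= x <= 1 -> continuous f x)
    by (intros x Hx; apply (@ex_derive_continuous R_AbsRing R_NormedModule), Hf, Hx).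
  unfold prob1. apply is_RInt_unique.
  replace (F u - F l) with (plus (plus 0 (F u - F l)) 0)
    by (unfold plus; simpl; ring).
  apply (@is_RInt_Chasles R_NormedModule _ 0 u 1);
    [apply (@is_RInt_Chasles R_NormedModule _ 0 l u)|].
  - apply is_RInt_zero_on; [lra|]. intros x Hx.
    destruct (excluded_middle_informative (A x)) as [HA|]; [|reflexivity].
    exfalso; apply (Hbelow x); auto.
  - apply (is_RInt_antiderivative F f); [lra| | |].
    + intros x Hx; apply HF; lra.
    + intros x Hx; apply Hfc; lra.
    + intros x Hx.
      destruct (excluded_middle_informative (A x)) as [|HA]; [reflexivity|].
      exfalso; apply HA, Hin, Hx.
  - apply is_RInt_zero_on; [lra|]. intros x Hx.
    destruct (excluded_middle_informative (A x)) as [HA|]; [|reflexivity].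
    exfalso; apply (Habove x); auto.
Qed.

Definition tie_term (N : nat) (a t : R) (k : nat) : R :=
  Binomial.C N k * a ^ (N - k) * t ^ k / INR (k + 1).

Definition tie_sum (N : nat) (a t : R) : R := sum_f_R0 (tie_term N a t) N.

Lemma dutch_win_probE n f p beta d :
  dutch_win_prob n f p beta d =
  tie_sum (n - 1) (prob1 f (fun x => x < p /\ beta x < d))
                  (prob1 f (fun x => x < p /\ beta x = d)).
Proof. reflexivity. Qed.

Lemma C_pos N k : 0 < Binomial.C N k.
Proof.
  apply Rdiv_lt_0_compat; [|apply Rmult_lt_0_compat];
    apply lt_0_INR, lt_O_fact.
Qed.

Lemma tie_term_ge0 N a t k : 0 <= a -> 0 <= t -> 0 <= tie_term N a t k.
Proof.
  intros Ha Ht. unfold tie_term.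
  assert (0 < INR (k + 1)) by (apply lt_0_INR; lia).
  apply Rdiv_le_0_compat; [|lra].
  apply Rmult_le_pos; [apply Rmult_le_pos|]; try apply pow_le; auto.
  left; apply C_pos.
Qed.

Lemma tie_term_le_binomial N a t k : 0 <= a -> 0 <= t ->
  tie_term N a t k <= Binomial.C N k * t ^ k * a ^ (N - k).
Proof.
  intros Ha Ht. unfold tie_term.
  assert (1 <= INR (k + 1)) by (rewrite plus_INR; simpl; generalize (pos_INR k); lra).
  assert (0 <= Binomial.C N k * a ^ (N - k) * t ^ k)
    by (apply Rmult_le_pos; [apply Rmult_le_pos|]; try apply pow_le; auto;
        left; apply C_pos).
  apply Rle_div_l; [lra|].
  replace (Binomial.C N k * t ^ k * a ^ (N - k) * INR (k + 1))
    with (Binomial.C N k * a ^ (N - k) * t ^ k * INR (k + 1)) by ring.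
  rewrite <- (Rmult_1_r (_ * t ^ k)) at 1.
  apply Rmult_le_compat_l; assumption.
Qed.

Lemma tie_sum_bounds N a t : (1 <= N)%nat -> 0 <= a -> 0 < t ->
  0 < tie_sum N a t < (a + t) ^ N.
Proof.
  intros HN Ha Ht. destruct N as [|N]; [lia|].
  unfold tie_sum. rewrite (Rplus_comm a t), binomial, !tech5.
  assert (Hlast : 0 < tie_term (S N) a t (S N) <
                    Binomial.C (S N) (S N) * t ^ S N * a ^ (S N - S N)).
  { unfold tie_term. rewrite Nat.sub_diag, C_n_n, pow_O, !Rmult_1_l, Rmult_1_r.
    assert (0 < t ^ S N) by (apply pow_lt; lra).
    assert (1 < INR (S N + 1))
      by (rewrite plus_INR, S_INR; simpl; generalize (pos_INR N); lra).
    split; [apply Rdiv_lt_0_compat; lra|].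
    apply Rlt_div_l; [lra|]. nra. }
  assert (0 <= sum_f_R0 (tie_term (S N) a t) N)
    by (apply cond_pos_sum; intros k; apply tie_term_ge0; lra).
  assert (sum_f_R0 (tie_term (S N) a t) N <=
          sum_f_R0 (fun k => Binomial.C (S N) k * t ^ k * a ^ (S N - k)) N)
    by (apply sum_Rle; intros k _; apply tie_term_le_binomial; lra).
  lra.
Qed.

Lemma tie_sum_0 N : (1 <= N)%nat -> tie_sum N 0 0 = 0.
Proof.
  intros HN. unfold tie_sum.
  rewrite (sum_eq _ (fun _ => 0)), sum_cte; [ring|].
  intros k Hk. unfold tie_term.
  rewrite Rmult_assoc, <- pow_add, pow_i by lia. unfold Rdiv; ring.
Qed.

Lemma one_sub_lt_cost (c c' : R -> R) d : 0 < d <= 1 -> c 0 = 1 ->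
  (forall t, 0 <= t <= 1 -> is_derive c t (c' t)) ->
  (forall t, 0 <= t <= 1 -> -1 < c' t) -> 1 - d < c d.
Proof.
  intros Hd Hc0 Hc Hc'.
  destruct (MVT_gen c 0 d c') as [x [Hx Hmvt]];
    rewrite ?Rmin_left, ?Rmax_right in * by lra.
  - intros x Hx. apply Hc; lra.
  - intros x Hx. apply continuity_pt_filterlim.
    apply (@ex_derive_continuous R_AbsRing R_NormedModule).
    exists (c' x); apply Hc; lra.
  - assert (-1 < c' x) by (apply Hc'; lra). rewrite Hc0 in Hmvt. nra.
Qed.

Lemma dutch_payoff_gt (c c' : R -> R) s q x : 0 <= q <= 1 -> 0 <= x < s -> s <= 1 ->
  c 0 = 1 ->
  (forall t, 0 <= t <= 1 -> is_derive c t (c' t)) ->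
  (forall t, 0 <= t <= 1 -> -1 < c' t) ->
  q - s < c (s - x) * q - x.
Proof.
  intros Hq Hx Hs Hc0 Hc Hc'.
  assert (1 - (s - x) < c (s - x)) by (apply (one_sub_lt_cost c c'); auto; lra).
  destruct (Rlt_or_le q 1) as [Hq1|Hq1].
  - assert (0 <= (c (s - x) - (1 - (s - x))) * q) by (apply Rmult_le_pos; lra).
    assert (0 < (s - x) * (1 - q)) by (apply Rmult_lt_0_compat; lra).
    nra.
  - replace q with 1 by lra. lra.
Qed.

Section DutchBidding.

Variables (n : nat) (F f c : R -> R) (s p lam : R) (b beta m : R -> R).

Hypotheses (n_ge2 : (2 <= n)%nat) (F0 : F 0 = 0)
  (F_incr : forall x y, 0 <= x -> x < y -> y <= 1 -> F x < F y)
  (F_deriv : forall x, 0 <= x <= 1 -> is_derive F x (f x))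
  (f_deriv : forall x, 0 <= x <= 1 -> ex_derive f x)
  (c0 : c 0 = 1) (s_bounds : 0 <= s <= 1) (p_bounds : s <= p <= 1)
  (lam_bounds : 0 <= lam <= p)
  (b_incr : forall x y, 0 <= x -> x < y -> y <= 1 -> b x < b y) (b0 : b 0 = 0)
  (beta_low : forall v, 0 <= v <= lam -> beta v = b v)
  (beta_high : forall v, lam <= v <= p -> beta v = s).

Lemma b_lam : b lam = s.
Proof. rewrite <- (beta_low lam), (beta_high lam); lra. Qed.

Lemma beta_pos : 0 < s -> forall x, 0 < x < p -> 0 < beta x.
Proof.
  intros Hs x Hx. destruct (Rle_lt_dec x lam).
  - rewrite beta_low, <- b0 by lra. apply b_incr; lra.
  - rewrite beta_high; lra.
Qed.

Lemma win_prob_at_start_price : lam < p ->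
  dutch_win_prob n f p beta s = tie_sum (n - 1) (F lam) (F p - F lam).
Proof.
  intros Hlp. rewrite dutch_win_probE. f_equal.
  - replace (F lam) with (F lam - F 0) by (rewrite F0; ring).
    apply (prob1_interval F f); auto; try lra.
    + intros x Hx. lra.
    + intros x Hx. split; [lra|].
      rewrite beta_low, <- b_lam by lra. apply b_incr; lra.
    + intros x Hx [Hxp Hlt]. rewrite beta_high in Hlt; lra.
  - apply (prob1_interval F f); auto; try lra.
    + intros x Hx [_ Heq]. rewrite beta_low, <- b_lam in Heq by lra.
      assert (b x < b lam) by (apply b_incr; lra). lra.
    + intros x Hx. split; [lra|]. apply beta_high; lra.
    + intros x Hx [Hxp _]. lra.
Qed.

Lemma win_prob_at_0 : 0 < s -> dutch_win_prob n f p beta 0 = 0.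
Proof.
  intros Hs. rewrite dutch_win_probE.
  assert (Hnull : forall A : R -> Prop,
            (forall x, 0 < x < 1 -> ~ A x) -> prob1 f A = 0).
  { intros A HA. rewrite <- (Rminus_diag (F 0)).
    apply (prob1_interval F f); auto; try lra; intros x Hx; try lra; apply HA; lra. }
  rewrite !Hnull; [apply tie_sum_0; lia| |];
    intros x Hx [Hxp Hbeta]; assert (0 < beta x) by (apply beta_pos; lra); lra.
Qed.

Lemma switch_point_eq_cutoff :
  IFA_sym_equilibrium n F f c s p beta m -> lam = p.
Proof.
  intros [_ Hwait].
  destruct (Req_dec lam p) as [|Hne]; [assumption|exfalso].
  assert (Hlp : lam < p) by lra.
  assert (HFlam : 0 <= F lam).
  { destruct (Req_dec lam 0) as [->|]; [lra|]. rewrite <- F0. left; apply F_incr; lra. }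
  assert (HFlp : F lam < F p) by (apply F_incr; lra).
  destruct (tie_sum_bounds (n - 1) (F lam) (F p - F lam)) as [Hwin_pos Hwin_lt];
    [lia|lra|lra|].
  replace (F lam + (F p - F lam)) with (F p) in Hwin_lt by ring.
  rewrite <- win_prob_at_start_price in Hwin_pos, Hwin_lt by exact Hlp.
  destruct (Rlt_or_le s p) as [Hsp|Hps].
  - set (v := (Rmax lam s + p) / 2).
    assert (lam < v < p /\ s < v)
      by (unfold v; generalize (Rmax_l lam s) (Rmax_r lam s) (Rmax_lub_lt lam s p);
          lra).
    destruct (Hwait v ltac:(lra) ltac:(lra)) as [Henter _].
    unfold enter_payoff, wait_payoff, Gcdf in Henter.
    destruct (Rle_dec p v); [lra|].
    rewrite beta_high, Rminus_diag, c0 in Henter by lra.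
    nra.
  - set (v := (lam + p) / 2).
    destruct (Hwait v ltac:(unfold v; lra) ltac:(unfold v; lra)) as [_ Hdev].
    specialize (Hdev 0 ltac:(lra)).
    unfold wait_payoff in Hdev.
    rewrite win_prob_at_0, beta_high, Rminus_diag, c0 in Hdev by (unfold v; lra).
    assert (v < s) by (unfold v; lra).
    nra.
Qed.

Lemma dutch_tie_prob_0 : lam = p -> dutch_pair_tie_prob f p beta = 0.
Proof.
  intros <-. unfold dutch_pair_tie_prob. apply is_RInt_unique, is_RInt_zero_on; [lra|].
  intros x Hx. destruct (Rlt_dec x lam) as [Hxl|]; [|reflexivity].
  replace (prob1 f (fun y => y < lam /\ beta y = beta x)) with 0; [ring|].
  rewrite (prob1_interval F f _ x x), Rminus_diag; auto; try lra.
  - intros y Hy [Hyl Heq]. rewrite !beta_low in Heq by lra.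
    assert (b y < b x) by (apply b_incr; lra). lra.
  - intros y Hy. lra.
  - intros y Hy [Hyl Heq]. rewrite !beta_low in Heq by lra.
    assert (b x < b y) by (apply b_incr; lra). lra.
Qed.

End DutchBidding.

Theorem lemma1 (n : nat) (F f c c' : R -> R) (s p lam : R) (b beta m : R -> R) :
  (2 <= n)%nat ->
  F 0 = 0 -> F 1 = 1 ->
  (forall x y, 0 <= x -> x < y -> y <= 1 -> F x < F y) ->
  (forall x, 0 <= x <= 1 -> is_derive F x (f x)) ->
  (forall x, 0 <= x <= 1 -> ex_derive f x) ->
  c 0 = 1 ->
  (forall t, 0 <= t <= 1 -> 0 <= c t) ->
  (forall t, 0 <= t <= 1 -> is_derive c t (c' t)) ->
  (forall t, 0 <= t <= 1 -> -1 < c' t) ->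
  ((forall t, 0 <= t <= 1 -> c t = 1) \/ (forall t, 0 <= t <= 1 -> c' t < 0)) ->
  0 <= s <= 1 ->
  s <= p <= 1 ->
  0 <= lam <= p ->
  (forall x y, 0 <= x -> x < y -> y <= 1 -> b x < b y) ->
  (forall v, 0 <= v <= 1 -> ex_derive b v) ->
  b 0 = 0 ->
  (forall v, 0 <= v <= lam -> 0 <= b v <= s) ->
  (forall v, 0 <= v <= lam -> beta v = b v) ->
  (forall v, lam <= v <= p -> beta v = s) ->
  (forall v, p <= v <= 1 -> s <= m v <= 1 /\ c (m v - s) * v - m v = 0) ->
  IFA_sym_equilibrium n F f c s p beta m ->
  lam = p /\
  dutch_pair_tie_prob f p beta = 0 /\
  (p < 1 -> c (s - b p) * p - b p = p - s ->
     b p = s /\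
     (forall q, 0 <= q <= 1 -> b q = s -> q = p) /\
     (forall q, s <= q < p -> c (s - b q) * q - b q <> q - s)) /\
  (p = 1 -> b 1 <= s).
Proof.
  intros Hn HF0 _ HF_incr HF_deriv Hf_deriv Hc0 _ Hc_deriv Hc'_gt _ Hs Hp Hlam
    Hb_incr _ Hb0 Hb_range Hbeta_low Hbeta_high _ Heq.
  assert (Hlp : lam = p)
    by (apply (switch_point_eq_cutoff n F f c s p lam b beta m); assumption).
  assert (Hbp : b p = s) by (rewrite <- Hlp; apply (b_lam s p lam b beta); assumption).
  split; [exact Hlp|].
  split; [apply (dutch_tie_prob_0 F f s p lam b beta); assumption|].
  (* [b p = s] already follows from [lam = p]. *)
  subst lam. split; [intros _ _; split; [exact Hbp|split]|].
  - intros q Hq Hbq.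
    destruct (Rtotal_order q p) as [Hqp|[Hqp|Hqp]]; [|exact Hqp|].
    + assert (b q < b p) by (apply Hb_incr; lra). lra.
    + assert (b p < b q) by (apply Hb_incr; lra). lra.
  - intros q Hq. apply Rgt_not_eq, (dutch_payoff_gt c c'); auto; try lra.
    assert (b q < b p) by (apply Hb_incr; lra).
    assert (0 <= b q <= s) by (apply Hb_range; lra).
    lra.
  - intros ->. apply Hb_range; lra.
Qed.
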